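(* Let $q$ be a prime power, $m\ge1$, $j\ge1$, let $G\in GF(q^m)[x]$ be separable with a factorization $G=\prod_{i=1}^{l}G_i$ into pairwise coprime factors, and let $L=\{\alpha_1,\dots,\alpha_n\}\subseteq GF(q^m)$ with $G(\alpha_k)\ne0$ for all $k$. Put $G_i^{(j)}=G_i^j$ and $G^{(j)}=G^j=\prod_{i=1}^l G_i^{(j)}$. If $r_i$ denotes the redundancy ($n$ minus the dimension) of the code $\Gamma(L,G_i^{(j)})$, then the dimension $k$ of $\Gamma(L,G^{(j)})$ satisfies $k\ge n-\sum_{i=1}^l r_i$.
   Context: For a set $L=\{\alpha_1,\dots,\alpha_n\}$ of distinct elements of $GF(q^m)$ and $P\in GF(q^m)[x]$ with $P(\alpha_k)\neq0$ for all $k$, the $q$-ary Goppa code is $\Gamma(L,P)=\{c\in GF(q)^n:\ \sum_k \frac{c_k}{x-\alpha_k}\equiv 0 \pmod{P(x)}\}$, a $GF(q)$-linear code; dimensions are over $GF(q)$. *)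

From HB Require Import structures.
From mathcomp Require Import all_boot all_order all_algebra all_field.
Set Implicit Arguments. Unset Strict Implicit. Unset Printing Implicit Defensive.
Import GRing.Theory.
Local Open Scope ring_scope.

(* GF(q) is a finite field F; GF(q^m) is a finite-dimensional field extension E
   of F (m = \dim {:E}, q = #|F|). *)

(* Inverse of a modulo P, via the extended Euclidean algorithm:
   e.1 * a + e.2 * P is associate to gcd(a,P); when a and P are coprime it is a
   nonzero constant c, and c^-1 * e.1 is the inverse of a in E[x]/(P). *)
Definition invmodp (E : fieldType) (P a : {poly E}) : {poly E} :=
  let e := egcdp a P in (lead_coef (e.1 * a + e.2 * P))^-1 *: e.1.

Definition goppa_code (F : finFieldType) (E : fieldExtType F) (n : nat)
    (alpha : 'I_n -> E) (P : {poly E}) : {set 'rV[F]_n} :=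
  [set c : 'rV[F]_n |
     P %| \sum_(k < n) (c ord0 k)%:A%:P * invmodp P ('X - (alpha k)%:P)].

Definition code_dim (F : finFieldType) (n : nat) (C : {set 'rV[F]_n}) : nat :=
  \dim <<enum C>>%VS.

From HB Require Import structures.
From mathcomp Require Import all_boot all_order all_algebra all_field.
From mathcomp Require Import zify.
Set Implicit Arguments. Unset Strict Implicit. Unset Printing Implicit Defensive.
Import GRing.Theory.
Local Open Scope ring_scope.

(* The G_i^j are pairwise coprime, so G^j divides the syndrome of c iff every
   G_i^j does; and since an inverse of x - alpha_k modulo G^j is also one modulo
   G_i^j, the syndrome modulo G^j is congruent to the syndrome modulo G_i^j.
   Hence Gamma(L, G^j) is the intersection of the subspaces Gamma(L, G_i^j) of
   GF(q)^n, and the codimension of an intersection is at most the sum of the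
   codimensions. *)

Lemma dvdp_invmodpM_sub1 (E : fieldType) (P a : {poly E}) :
  coprimep a P -> P %| invmodp P a * a - 1.
Proof.
rewrite /invmodp /coprimep => cop.
set e := egcdp a P.
move: cop; rewrite (eqp_size (egcdpE a P)) -/e => /size_poly1P[c c0 Hc].
rewrite Hc lead_coefC -mul_polyC -mulrA.
have -> : e.1 * a = c%:P - e.2 * P by rewrite -Hc addrK.
rewrite mulrBr -polyCM mulVf // polyC1 addrAC subrr add0r mulrA -mulNr.
exact: dvdp_mull (dvdpp P).
Qed.

Lemma dvdp_invmodp_sub (E : fieldType) (P Q a : {poly E}) :
  coprimep a P -> Q %| P -> Q %| invmodp P a - invmodp Q a.
Proof.
move=> aP QP.
have Qa : coprimep Q a by apply: coprimep_dvdr QP _; rewrite coprimep_sym.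
rewrite -(Gauss_dvdpl _ Qa).
have -> : (invmodp P a - invmodp Q a) * a =
          (invmodp P a * a - 1) - (invmodp Q a * a - 1).
  by rewrite mulrBl opprB addrA subrK.
apply: dvdp_sub; first exact: dvdp_trans QP (dvdp_invmodpM_sub1 aP).
by rewrite dvdp_invmodpM_sub1 // coprimep_sym.
Qed.

Lemma dvdp_prod_pairwise_coprime (E : fieldType) (l : nat)
    (Ps : 'I_l -> {poly E}) (p : {poly E}) :
  (forall i i' : 'I_l, i != i' -> coprimep (Ps i) (Ps i')) ->
  (\prod_(i < l) Ps i %| p) = [forall i, Ps i %| p].
Proof.
elim: l Ps => [|l IH] Ps cop.
  by rewrite big_ord0 dvd1p; symmetry; apply/forallP => -[].
have cop_last : coprimep (\prod_(i < l) Ps (widen_ord (leqnSn l) i)) (Ps ord_max).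
  elim/big_ind: _ => [|x y hx hy|i _]; first exact: coprime1p.
    by rewrite coprimepMl hx hy.
  by apply: cop; rewrite neq_ltn /= ltn_ord.
rewrite big_ord_recr /= Gauss_dvdp // IH; last first.
  by move=> i i' ii'; apply: cop; apply: contra ii' => /eqP[/val_inj ->].
apply/andP/forallP => [[/forallP Pp Plast] i|Pp]; last by split=> //; apply/forallP.
case: (unliftP ord_max i) => [i'|] ->; last exact: Plast.
suff -> : lift ord_max i' = widen_ord (leqnSn l) i' by [].
by apply/val_inj; rewrite /= /bump leqNgt ltn_ord.
Qed.

Lemma memv_bigcap (K : fieldType) (vT : vectType K) (l : nat)
    (V : 'I_l -> {vspace vT}) (x : vT) :
  (x \in (\bigcap_(i < l) V i)%VS) = [forall i, x \in V i].
Proof.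
rewrite memvE; apply/subv_bigcapP/forallP => Vx i; first exact: Vx.
by move=> _; rewrite -memvE.
Qed.

Lemma dimv_bigcap_codim (K : fieldType) (vT : vectType K) (l : nat)
    (V : 'I_l -> {vspace vT}) :
  (\dim {:vT} <= \dim (\bigcap_(i < l) V i) + \sum_(i < l) (\dim {:vT} - \dim (V i)))%N.
Proof.
elim: l V => [|l IH] V; first by rewrite !big_ord0 addn0.
rewrite !big_ord_recr /=.
set A := (\bigcap_(i < l) V (widen_ord (leqnSn l) i))%VS.
have := IH (fun i => V (widen_ord (leqnSn l) i)); rewrite -/A.
have := dimv_sum_cap A (V ord_max).
have : (\dim (A + V ord_max) <= \dim {:vT})%N by apply/dimvS/subvf.
have : (\dim (V ord_max) <= \dim {:vT})%N by apply/dimvS/subvf.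
set s := \sum_(i < l) _; set N := \dim {:vT}; set a := \dim A; set b := \dim (V ord_max).
set c := \dim (A :&: _); set d := \dim (A + _).
lia.
Qed.

Lemma span_submod_closed (K : fieldType) (vT : vectType K) (S : {pred vT})
    (X : seq vT) :
  submod_closed S -> {subset X <= S} -> {subset <<X>>%VS <= S}.
Proof.
move=> [S0 Slin] XS x /(@coord_span _ _ _ (in_tuple X)) ->.
elim/big_ind: _ => // [u v Su Sv|i _]; first by rewrite -[u]scale1r Slin.
rewrite -[_ *: _]addr0 Slin //; apply: XS.
exact: mem_nth.
Qed.

Section GoppaCode.
Variables (F : finFieldType) (E : fieldExtType F) (n : nat) (alpha : 'I_n -> E).

Definition goppa_syndrome (P : {poly E}) (c : 'rV[F]_n) : {poly E} :=
  \sum_(k < n) (c ord0 k)%:A%:P * invmodp P ('X - (alpha k)%:P).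

Lemma mem_goppa_code P c : (c \in goppa_code alpha P) = (P %| goppa_syndrome P c).
Proof. by rewrite inE. Qed.

Lemma goppa_code_submod_closed P : submod_closed (goppa_code alpha P).
Proof.
split=> [|a c d].
  rewrite mem_goppa_code /goppa_syndrome big1 ?dvdp0 // => k _.
  by rewrite mxE scale0r polyC0 mul0r.
rewrite !mem_goppa_code => Pc Pd.
have -> : goppa_syndrome P (a *: c + d) =
          a%:A%:P * goppa_syndrome P c + goppa_syndrome P d.
  rewrite /goppa_syndrome mulr_sumr -big_split /=; apply: eq_bigr => k _.
  by rewrite !mxE scalerDl -scalerA -mulr_algl polyCD polyCM mulrDl mulrA.
by rewrite dvdp_add ?dvdp_mull.
Qed.

Lemma mem_span_goppa_code P c :
  (c \in <<enum (goppa_code alpha P)>>%VS) = (c \in goppa_code alpha P).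
Proof.
apply/idP/idP => [|Pc]; last by rewrite memv_span ?mem_enum.
by apply: (span_submod_closed (goppa_code_submod_closed P)) => x; rewrite mem_enum.
Qed.

Lemma dvdp_goppa_syndrome P Q c :
  (forall k, coprimep ('X - (alpha k)%:P) P) -> Q %| P ->
  (Q %| goppa_syndrome P c) = (Q %| goppa_syndrome Q c).
Proof.
move=> cop QP; rewrite -(subrK (goppa_syndrome Q c) (goppa_syndrome P c)) dvdp_addr //.
rewrite /goppa_syndrome -sumrB; elim/big_ind: _ => [|u v|k _]; first exact: dvdp0.
  exact: dvdp_add.
by rewrite -mulrBr dvdp_mull // dvdp_invmodp_sub.
Qed.

Lemma goppa_code_prod l (Ps : 'I_l -> {poly E}) c :
  (forall i i' : 'I_l, i != i' -> coprimep (Ps i) (Ps i')) ->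
  (forall k, coprimep ('X - (alpha k)%:P) (\prod_(i < l) Ps i)) ->
  (c \in goppa_code alpha (\prod_(i < l) Ps i)) = [forall i, c \in goppa_code alpha (Ps i)].
Proof.
move=> cop copX; rewrite mem_goppa_code dvdp_prod_pairwise_coprime //.
apply: eq_forallb => i; rewrite mem_goppa_code dvdp_goppa_syndrome //.
by rewrite (bigD1 i) //= dvdp_mulIl.
Qed.

End GoppaCode.

Theorem lemma2 (F : finFieldType) (E : fieldExtType F) (n l j : nat)
    (alpha : 'I_n -> E) (G : {poly E}) (Gs : 'I_l -> {poly E}) :
  (1 <= j)%N ->
  injective alpha ->
  separable_poly G ->
  G = \prod_(i < l) Gs i ->
  (forall i i' : 'I_l, i != i' -> coprimep (Gs i) (Gs i')) ->
  (forall k, G.[alpha k] != 0) ->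
  (code_dim (goppa_code alpha (G ^+ j))
     >= n - \sum_(i < l) (n - code_dim (goppa_code alpha (Gs i ^+ j))))%N.
Proof.
move=> _ _ _ defG cop G0.
have defGj : G ^+ j = \prod_(i < l) Gs i ^+ j by rewrite defG prodrXl.
have copj i i' : i != i' -> coprimep (Gs i ^+ j) (Gs i' ^+ j).
  by move=> ii'; apply/coprimep_expl/coprimep_expr/cop.
have copX k : coprimep ('X - (alpha k)%:P) (\prod_(i < l) Gs i ^+ j).
  by rewrite -defGj; apply/coprimep_expr; rewrite coprimep_sym coprimep_XsubC rootE G0.
rewrite /code_dim.
have -> : <<enum (goppa_code alpha (G ^+ j))>>%VS =
          (\bigcap_(i < l) <<enum (goppa_code alpha (Gs i ^+ j))>>)%VS.
  apply/vspaceP => c; rewrite memv_bigcap mem_span_goppa_code defGj goppa_code_prod //.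
  by apply: eq_forallb => i; rewrite mem_span_goppa_code.
have := dimv_bigcap_codim (fun i => <<enum (goppa_code alpha (Gs i ^+ j))>>%VS).
by rewrite dimvf dim_matrix mul1r leq_subLR addnC.
Qed.
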